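(* Let $n\geq 2$ be finite, let $\mathfrak{A}\in TA_n$ be countable, let $a\in A$ be nonzero and let $X\subseteq A$ satisfy $\prod X=0$ in $\mathfrak A$. Then there exist a permutable set $V$ (one may take $V=S_n$, the set of permutations of $n$) and a homomorphism $h:\mathfrak{A}\to\wp(V)$ such that $h(a)\neq\emptyset$ and $\bigcap_{x\in X}h(x)=\emptyset$.
   Context: $TA_n=\mathbf{Mod}(\Sigma_n)$, where $\Sigma_n$ consists of the Boolean algebra axioms, the equations saying each $s_{ij}$ ($i\neq j<n$) is a Boolean endomorphism, and $t_1(x)=t_2(x)$ for all words $t_1,t_2$ in the $s_{ij}$ whose associated compositions of transpositions $[i,j]$ coincide in $S_n$. A set $V\subseteq{}^nU$ is permutable if $s\circ[i,j]\in V$ whenever $s\in V$, $i\neq j<n$. $\wp(V)=\langle\mathcal P(V);\cap,-,S_{ij}\rangle$ with complement relative to $V$ and $S_{ij}(Y)=\{q\in V:q\circ[i,j]\in Y\}$. *)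

From HB Require Import structures.
From mathcomp Require Import all_boot all_order all_fingroup.
Set Implicit Arguments. Unset Strict Implicit. Unset Printing Implicit Defensive.
Import Order.TTheory.
Local Open Scope order_scope.

(* A word in the s_ij is a list of index pairs [(i1,j1);...;(ik,jk)],
   denoting the term s_{i1 j1}(s_{i2 j2}(... s_{ik jk}(x))). *)
Definition word (n : nat) := seq ('I_n * 'I_n).

Definition proper_word n (w : word n) : bool := all (fun p => p.1 != p.2) w.

Definition weval (n : nat) (T : Type) (s : 'I_n -> 'I_n -> T -> T)
  (w : word n) (x : T) : T := foldr (fun p y => s p.1 p.2 y) x w.

Definition wperm (n : nat) (w : word n) : 'S_n :=
  foldr (fun p acc => (tperm p.1 p.2 * acc)%g) 1%g w.

(* The Boolean algebra axioms are provided by A : ctbDistrLatticeType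
   (complemented distributive lattice with top and bottom = Boolean algebra). *)
Definition isTA (d : Order.disp_t) (A : ctbDistrLatticeType d) (n : nat)
  (s : 'I_n -> 'I_n -> A -> A) : Prop :=
  (forall i j : 'I_n, i != j ->
     (forall x y, s i j (x `&` y) = s i j x `&` s i j y) /\
     (forall x y, s i j (x `|` y) = s i j x `|` s i j y) /\
     (forall x, s i j (~` x) = ~` s i j x) /\
     s i j \bot = \bot /\ s i j \top = \top) /\
  (forall w1 w2 : word n, proper_word w1 -> proper_word w2 ->
     wperm w1 = wperm w2 -> forall x, weval s w1 x = weval s w2 x).

Definition countable_type (T : Type) : Prop :=
  exists f : T -> nat, injective f.

Definition inf_is_bot (d : Order.disp_t) (A : ctbDistrLatticeType d)
  (X : A -> Prop) : Prop :=
  forall b : A, (forall x, X x -> b <= x) -> b = \bot.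

Definition compT (n : nat) (U : Type) (q : 'I_n -> U) (i j : 'I_n) : 'I_n -> U :=
  fun k => q (tperm i j k).

Definition permutable (n : nat) (U : Type) (V : ('I_n -> U) -> Prop) : Prop :=
  forall q, V q -> forall i j : 'I_n, i != j -> V (compT q i j).

Definition wp_hom (d : Order.disp_t) (A : ctbDistrLatticeType d) (n : nat)
  (s : 'I_n -> 'I_n -> A -> A) (U : Type) (V : ('I_n -> U) -> Prop)
  (h : A -> ('I_n -> U) -> Prop) : Prop :=
  (forall x q, h x q -> V q) /\
  (forall x y q, h (x `&` y) q <-> (h x q /\ h y q)) /\
  (forall x q, h (~` x) q <-> (V q /\ ~ h x q)) /\
  (forall i j : 'I_n, i != j -> forall x q,
     h (s i j x) q <-> (V q /\ h x (compT q i j))).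

Arguments compT {n U} q i j.
Definition Sn_set {n : nat} : ('I_n -> 'I_n) -> Prop := fun q => bijective q.

(* The proof is a Rasiowa-Sikorski style argument:
   - the axioms of TA_n make  p |-> (the term of any word for p)  a
     well-defined action of S_n on A by Boolean automorphisms (pact);
   - each automorphism  pact p  preserves the meet  prod X = 0, so below any
     nonzero b there is a nonzero b' avoiding the whole family  pact p X
     for each of the finitely many p in S_n (avoid_perms);
   - in a countable Boolean algebra every nonzero element lies in an
     ultrafilter F (countable_ultrafilter), built from a decreasing chain
     that decides each element in turn;
   - the map  h x = {q in S_n | pact q^-1 x in F}  is a homomorphism into
     wp(S_n) (rep_hom); choosing F above b' makes h(a) contain the identity
     and gives every q in S_n some x in X with q not in h(x). *)
From HB Require Import structures.
From mathcomp Require Import all_boot all_order all_fingroup.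
From Stdlib Require Import Classical ClassicalEpsilon.
Import Order.TTheory Order.CTBDistrLatticeTheory.
Local Open Scope order_scope.
Set Implicit Arguments. Unset Strict Implicit.

Section Words.
Variable n : nat.

Lemma wperm_prod (w : word n) : wperm w = (\prod_(t <- w) tperm t.1 t.2)%g.
Proof. by elim: w => [|t w IH]; rewrite ?big_nil ?big_cons //= IH. Qed.

Lemma wperm_cat (w1 w2 : word n) : wperm (w1 ++ w2) = (wperm w1 * wperm w2)%g.
Proof. by rewrite !wperm_prod big_cat. Qed.

Lemma weval_cat (T : Type) (s : 'I_n -> 'I_n -> T -> T) (w1 w2 : word n) x :
  weval s (w1 ++ w2) x = weval s w1 (weval s w2 x).
Proof. by rewrite /weval foldr_cat. Qed.

(* A chosen proper word for each permutation: S_n is generated by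
   transpositions. *)
Definition word_of (p : 'S_n) : word n := sval (prod_tpermP p).

Lemma word_ofK (p : 'S_n) : wperm (word_of p) = p.
Proof. by rewrite wperm_prod /word_of; case: (prod_tpermP p). Qed.

Lemma word_of_proper (p : 'S_n) : proper_word (word_of p).
Proof. by rewrite /word_of; case: (prod_tpermP p). Qed.

End Words.

Section PermAction.
Variables (d : Order.disp_t) (A : ctbDistrLatticeType d) (n : nat).
Variables (s : 'I_n -> 'I_n -> A -> A) (HTA : isTA s).

Lemma weval_meet (w : word n) x y : proper_word w ->
  weval s w (x `&` y) = weval s w x `&` weval s w y.
Proof.
elim: w => //= t w IH /andP[tt pw].
by rewrite -!/(weval s w _) IH // (HTA.1 _ _ tt).1.
Qed.

Lemma weval_compl (w : word n) x : proper_word w ->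
  weval s w (~` x) = ~` weval s w x.
Proof.
elim: w => //= t w IH /andP[tt pw].
by rewrite -!/(weval s w _) IH // (HTA.1 _ _ tt).2.2.1.
Qed.

Lemma weval_bot (w : word n) : proper_word w -> weval s w \bot = \bot.
Proof.
elim: w => //= t w IH /andP[tt pw].
by rewrite -!/(weval s w _) IH // (HTA.1 _ _ tt).2.2.2.1.
Qed.

Definition pact (p : 'S_n) (x : A) : A := weval s (word_of p) x.

(* Well-definedness: this is exactly the last group of axioms of TA_n. *)
Lemma pact_wperm (w : word n) x : proper_word w -> pact (wperm w) x = weval s w x.
Proof. by move=> pw; apply: HTA.2; rewrite ?word_ofK //; apply: word_of_proper. Qed.

Lemma pactM (u v : 'S_n) x : pact (u * v)%g x = pact u (pact v x).
Proof.
rewrite -{1}(word_ofK u) -{1}(word_ofK v) -wperm_cat pact_wperm ?weval_cat //.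
by rewrite /proper_word all_cat; apply/andP; split; apply: word_of_proper.
Qed.

Lemma pact1 x : pact 1%g x = x.
Proof. by rewrite -[1%g]/(wperm [::]) pact_wperm. Qed.

Lemma pact_tperm (i j : 'I_n) x : i != j -> pact (tperm i j) x = s i j x.
Proof.
move=> ij; have -> : tperm i j = wperm [:: (i, j)] by rewrite /= mulg1.
by rewrite pact_wperm //= ij.
Qed.

Lemma pactI p x y : pact p (x `&` y) = pact p x `&` pact p y.
Proof. exact/weval_meet/word_of_proper. Qed.

Lemma pactC p x : pact p (~` x) = ~` pact p x.
Proof. exact/weval_compl/word_of_proper. Qed.

Lemma pact0 p : pact p \bot = \bot.
Proof. exact/weval_bot/word_of_proper. Qed.

Lemma pact_le p x y : x <= y -> pact p x <= pact p y.
Proof. by move=> /meet_idPl xy; apply/meet_idPl; rewrite -pactI xy. Qed.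

Lemma pactVK p x : pact p^-1 (pact p x) = x.
Proof. by rewrite -pactM mulVg pact1. Qed.

Lemma pactKV p x : pact p (pact p^-1 x) = x.
Proof. by rewrite -pactM mulgV pact1. Qed.

Variables (X : A -> Prop) (HX : inf_is_bot X).

Lemma pact_inf_bot p b : (forall x, X x -> b <= pact p x) -> b = \bot.
Proof.
move=> below; rewrite -(pactKV p b) (HX (b := pact p^-1 b)) ?pact0 // => x Xx.
by rewrite -(pactVK p x) pact_le ?below.
Qed.

Lemma shrink_avoiding p b : b != \bot ->
  exists x, X x /\ b `&` ~` pact p x != \bot.
Proof.
move=> bn; apply: NNPP => none; move/eqP: bn; apply; apply: (@pact_inf_bot p).
move=> x Xx; apply: NNPP => nle; apply: none; exists x; split => //.
by rewrite disj_leC complK; apply/negP.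
Qed.

Lemma avoid_perms (l : seq 'S_n) b : b != \bot -> exists b', b' != \bot /\
  b' <= b /\ forall p, p \in l -> exists x, X x /\ b' <= ~` pact p x.
Proof.
elim: l b => [|p l IH] b bn; first by exists b.
have [b' [b'n [b'b avoid]]] := IH b bn.
have [x [Xx b''n]] := shrink_avoiding p b'n.
exists (b' `&` ~` pact p x); split=> //; split; first exact: le_trans (leIl _ _) b'b.
move=> p'; rewrite inE => /orP[/eqP ->|/avoid[y [Xy le_y]]].
  by exists x; rewrite leIr.
by exists y; split=> //; apply: le_trans (leIl _ _) le_y.
Qed.

End PermAction.

Definition ultrafilter (d : Order.disp_t) (A : ctbDistrLatticeType d)
  (F : A -> Prop) : Prop :=
  (forall x y, F (x `&` y) <-> F x /\ F y) /\ (forall x, F (~` x) <-> ~ F x).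

Lemma ultrafilter_up (d : Order.disp_t) (A : ctbDistrLatticeType d)
  (F : A -> Prop) x y : ultrafilter F -> x <= y -> F x -> F y.
Proof. by move=> [FI _] /meet_idPl xy; rewrite -xy => /FI[]. Qed.

Section CountableUltrafilter.
Variables (d : Order.disp_t) (A : ctbDistrLatticeType d).
Variables (f : A -> nat) (f_inj : injective f).

Definition decode (k : nat) : option A :=
  match excluded_middle_informative (exists x, f x = k) with
  | left ex => Some (proj1_sig (constructive_indefinite_description _ ex))
  | right _ => None
  end.

Lemma decodeK x : decode (f x) = Some x.
Proof.
rewrite /decode; case: excluded_middle_informative => [ex|]; last by case; exists x.
by case: constructive_indefinite_description => y /= /f_inj ->.
Qed.

Definition decide (c : A) (o : option A) : A :=
  if o is Some x then (if c `&` x == \bot then c `&` ~` x else c `&` x) else c.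

Lemma decide_neq0 c o : c != \bot -> decide c o != \bot.
Proof.
case: o => [x|] //= cn; case: ifP => [|-> //].
by rewrite disj_leC => /meet_l ->.
Qed.

Lemma decide_le c o : decide c o <= c.
Proof. by case: o => [x|] //=; case: ifP; rewrite leIl. Qed.

Fixpoint chain (b : A) (k : nat) : A :=
  if k is k'.+1 then decide (chain b k') (decode k') else b.

Variable b : A.

Lemma chain_neq0 k : b != \bot -> chain b k != \bot.
Proof. by move=> bn; elim: k => //= k IH; apply: decide_neq0. Qed.

Lemma chain_decr m k : (m <= k)%N -> chain b k <= chain b m.
Proof.
move=> /subnK <-; elim: (k - m)%N => //= i IH.
exact: le_trans (decide_le _ _) IH.
Qed.

Lemma chain_decides x : chain b (f x).+1 <= x \/ chain b (f x).+1 <= ~` x.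
Proof. by rewrite /= decodeK /=; case: ifP => _; [right|left]; apply: leIr. Qed.

Definition chain_filter (y : A) : Prop := exists k, chain b k <= y.

Lemma chain_filterI x y :
  chain_filter x -> chain_filter y -> chain_filter (x `&` y).
Proof.
move=> [k kx] [m my]; exists (maxn k m); rewrite lexI.
rewrite (le_trans (chain_decr (leq_maxl k m)) kx).
by rewrite (le_trans (chain_decr (leq_maxr k m)) my).
Qed.

Lemma chain_ultrafilter : b != \bot -> ultrafilter chain_filter.
Proof.
move=> bn; split=> x.
  move=> y; split=> [[k le_k]|[]]; last exact: chain_filterI.
  by split; exists k; apply: le_trans le_k _; rewrite ?leIl ?leIr.
split=> [Fnx Fx|nFx].
  have [k] := chain_filterI Fx Fnx.
  by rewrite meetxC lex0; apply/negP/chain_neq0.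
by case: (chain_decides x) => le_x; [case: nFx|]; exists (f x).+1.
Qed.

End CountableUltrafilter.

Lemma countable_ultrafilter (d : Order.disp_t) (A : ctbDistrLatticeType d)
  (b : A) : countable_type A -> b != \bot -> exists F, ultrafilter F /\ F b.
Proof.
move=> [f f_inj] bn; exists (chain_filter f b).
by split; [apply: chain_ultrafilter | exists 0%N].
Qed.

Section Representation.
Variable n : nat.

Definition perm_of (q : 'I_n -> 'I_n) : 'S_n :=
  insubd (1%g : 'S_n) [ffun k => q k].

Lemma perm_ofE (q : 'I_n -> 'I_n) : injective q -> forall k, perm_of q k = q k.
Proof.
move=> q_inj k; have qb : injectiveb [ffun k => q k].
  by apply/injectiveP => x y; rewrite !ffunE => /q_inj.
by rewrite -pvalE /perm_of; have := insubdK (1%g : 'S_n) qb; rewrite /val /= => ->; rewrite ffunE.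
Qed.

Lemma compT_bij (q : 'I_n -> 'I_n) (i j : 'I_n) :
  bijective q -> bijective (compT q i j).
Proof. by move=> /bij_inj q_inj; apply: injF_bij => x y /q_inj /perm_inj. Qed.

Lemma perm_of_id : perm_of id = 1%g.
Proof. by apply/permP => k; rewrite perm_ofE // perm1. Qed.

Lemma perm_of_compT (q : 'I_n -> 'I_n) (i j : 'I_n) : bijective q ->
  perm_of (compT q i j) = (tperm i j * perm_of q)%g.
Proof.
move=> qb; apply/permP => k; rewrite permM !perm_ofE //.
  exact: bij_inj.
exact: bij_inj (compT_bij i j qb).
Qed.

Variables (d : Order.disp_t) (A : ctbDistrLatticeType d).
Variables (s : 'I_n -> 'I_n -> A -> A) (HTA : isTA s).

Definition rep (F : A -> Prop) (x : A) (q : 'I_n -> 'I_n) : Prop :=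
  bijective q /\ F (pact s (perm_of q)^-1 x).

(* Meets and complements are preserved by the ultrafilter laws, and S_ij
   because  perm_of (q o [i,j])^-1 = (perm_of q)^-1 [i,j]. *)
Lemma rep_hom F : ultrafilter F -> wp_hom s Sn_set (rep F).
Proof.
move=> [FI FC]; split; first by move=> x q [].
split; first by move=> x y q; rewrite /rep pactI // FI; tauto.
split; first by move=> x q; rewrite /rep pactC // FC; tauto.
move=> i j ij x q; rewrite /rep -pact_tperm // -pactM //.
split=> [[qb Fq]|[qb [_ Fq]]].
  by do !split=> //; rewrite ?perm_of_compT // ?invMg ?tpermV //; apply: compT_bij.
by split=> //; rewrite perm_of_compT // invMg tpermV in Fq.
Qed.

Lemma rep_id F x : rep F x id <-> F x.
Proof.
rewrite /rep perm_of_id invg1 pact1 //.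
by split=> [[]|Fx] //; split=> //; exists id.
Qed.

End Representation.

Theorem theorem3p18 (n : nat) (hn : (1 < n)%N) (d : Order.disp_t)
  (A : ctbDistrLatticeType d) (s : 'I_n -> 'I_n -> A -> A)
  (HTA : isTA s) (Hcount : countable_type A)
  (a : A) (Ha : a != \bot) (X : A -> Prop) (HX : inf_is_bot X) :
  permutable (@Sn_set n) /\
  exists h : A -> ('I_n -> 'I_n) -> Prop,
    wp_hom s (@Sn_set n) h /\
    (exists q, h a q) /\
    (forall q, @Sn_set n q -> ~ (forall x, X x -> h x q)).
Proof.
split; first by move=> q qb i j _; apply: compT_bij.
have [b [bn [ba avoid]]] := avoid_perms HTA HX (enum 'S_n) Ha.
have [F [F_ultra Fb]] := countable_ultrafilter Hcount bn.
exists (rep s F); split; first exact: rep_hom.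
split; first by exists id; apply/(rep_id HTA); apply: ultrafilter_up F_ultra ba Fb.
move=> q _ in_all.
have [x [Xx b_avoids]] := avoid ((perm_of q)^-1)%g (mem_enum _ _).
have [_ Fx] := in_all x Xx.
by have := ultrafilter_up F_ultra b_avoids Fb; rewrite F_ultra.2.
Qed.
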